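(* Let $f=\frac1n\sum_{i=1}^n f_i$ where each $f_i:\mathbb{R}^d\to\mathbb{R}$ is $L$-smooth, and assume moreover that either each $f_i$ is $\mu$-strongly convex for some $\mu>0$, or $\inf_x f(x)>-\infty$. Let the stepsize satisfy $\gamma\le\frac1{2Ln}$. Then the iterates of No Full Grad SVRG (described in the context) satisfy, for every epoch $s\ge1$, $$\Big\|\nabla f(\omega_s)-\frac1n\sum_{t=0}^{n-1}v_s^t\Big\|^2\le 8\gamma^2L^2n^2\|v_s\|^2+32\gamma^2L^2n^2\|v_{s-1}\|^2.$$
   Context: No Full Grad SVRG: input $x_0^0\in\mathbb{R}^d$, $\omega_0=x_0^0$, $\tilde v_0^0=0$, $v_0=0$, stepsize $\gamma>0$. For epochs $s=0,1,\dots$: choose a permutation $\pi_s^0,\dots,\pi_s^{n-1}$ of the $n$ component indices (by any shuffling rule); for $t=0,\dots,n-1$ set $\tilde v_s^{t+1}=\frac{t}{t+1}\tilde v_s^t+\frac1{t+1}\nabla f_{\pi_s^t}(x_s^t)$, $v_s^t=\nabla f_{\pi_s^t}(x_s^t)-\nabla f_{\pi_s^t}(\omega_s)+v_s$, $x_s^{t+1}=x_s^t-\gamma v_s^t$; then $x_{s+1}^0=x_s^n$, $\omega_{s+1}=x_s^n$, $\tilde v_{s+1}^0=0$, $v_{s+1}=\tilde v_s^n$. *)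

From HB Require Import structures.
From mathcomp Require Import all_boot all_order all_algebra all_fingroup.
From mathcomp Require Import all_classical all_reals all_analysis.
Set Implicit Arguments. Unset Strict Implicit. Unset Printing Implicit Defensive.
Import Order.TTheory GRing.Theory Num.Theory.
Import numFieldNormedType.Exports.
Local Open Scope ring_scope.

Section NFGSVRG.
Variable R : realType.
Variable d : nat.

Definition dotv (u v : 'rV[R]_d) : R := \sum_(k < d) u ord0 k * v ord0 k.
Definition enorm (u : 'rV[R]_d) : R := Num.sqrt (dotv u u).

Definition is_gradient (f : 'rV[R]_d -> R) (g : 'rV[R]_d -> 'rV[R]_d) : Prop :=
  forall x, differentiable f x /\ forall h, 'd f x h = dotv (g x) h.

Definition L_smooth (L : R) (f : 'rV[R]_d -> R) (g : 'rV[R]_d -> 'rV[R]_d) : Prop :=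
  is_gradient f g /\ forall x y, enorm (g x - g y) <= L * enorm (x - y).

Definition strongly_convex (mu : R) (f : 'rV[R]_d -> R) : Prop :=
  forall (x y : 'rV[R]_d) (t : R), 0 <= t <= 1 ->
    f (t *: x + (1 - t) *: y) <=
      t * f x + (1 - t) * f y - mu / 2 * t * (1 - t) * enorm (x - y) ^+ 2.

Variable n : nat.
Variable G : 'I_n -> 'rV[R]_d -> 'rV[R]_d.   (* gradients of the f_i *)
Variable gamma : R.

(* Inner loop of epoch with permutation p, anchor w (= omega_s),
   v = v_s, start point x0 = x_s^0.
   inner t = (x_s^t, tilde v_s^t), for t <= n. *)
Fixpoint inner (p : {perm 'I_n}) (w v x0 : 'rV[R]_d) (t : nat)
  : 'rV[R]_d * 'rV[R]_d :=
  match t with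
  | 0 => (x0, 0)
  | t'.+1 =>
    let: (x, vt) := inner p w v x0 t' in
    if @insub nat (fun k => k < n)%N 'I_n t' is Some i then
      let j := p i in
      (x - gamma *: (G j x - G j w + v),
       (t'%:R / t'.+1%:R) *: vt + (1 / t'.+1%:R) *: G j x)
    else (x, vt)
  end.

Variable pi : nat -> {perm 'I_n}.
Variable x00 : 'rV[R]_d.

(* state s = (x_s^0, omega_s, v_s) *)
Fixpoint state (s : nat) : 'rV[R]_d * 'rV[R]_d * 'rV[R]_d :=
  match s with
  | 0 => (x00, x00, 0)
  | s'.+1 =>
    let: (x0, w, v) := state s' in
    let: (xn, vtn) := inner (pi s') w v x0 n in
    (xn, xn, vtn)
  end.

Definition x_it (s t : nat) : 'rV[R]_d :=
  let: (x0, w, v) := state s in (inner (pi s) w v x0 t).1.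
Definition omega (s : nat) : 'rV[R]_d := (state s).1.2.
Definition vbar (s : nat) : 'rV[R]_d := (state s).2.

(* v_s^t for t : 'I_n *)
Definition v_dir (s : nat) (t : 'I_n) : 'rV[R]_d :=
  let j := pi s t in G j (x_it s t) - G j (omega s) + vbar s.

End NFGSVRG.

From HB Require Import structures.
From mathcomp Require Import all_boot all_order all_algebra all_fingroup.
From mathcomp Require Import all_classical all_reals all_analysis.
From mathcomp Require Import lra.
Import Order.TTheory GRing.Theory Num.Theory.
Import numFieldNormedType.Exports.
Local Open Scope ring_scope.

(* In an epoch with anchor w and direction v every step moves the
   iterate by at most gamma (L |x - w| + |v|), so all iterates of the epoch
   stay within 2 gamma n |v| of w.  The mean of the v_s^t is the mean of the
   gradients sampled along epoch s, minus grad f(w_s), plus v_s; hence the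
   error is (grad f(w_s) - sampled mean) + (grad f(w_s) - v_s).  The first
   term is at most 2 gamma L n |v_s| by the drift bound.  For the second,
   v_s is the mean of the gradients sampled along epoch s-1 and w_s is the
   last iterate of that epoch, so it is at most 4 gamma L n |v_{s-1}|.
   Conclude with (a + b)^2 <= 2 a^2 + 2 b^2. *)

Section EuclideanNorm.
Context {R : realType} {d : nat}.
Implicit Types u v w : 'rV[R]_d.

Lemma dotvC u v : dotv u v = dotv v u.
Proof. by apply: eq_bigr => k _; rewrite mulrC. Qed.

Lemma dotvDl u w v : dotv (u + w) v = dotv u v + dotv w v.
Proof. by rewrite /dotv -big_split; apply: eq_bigr => k _; rewrite mxE mulrDl. Qed.

Lemma dotvZl a u v : dotv (a *: u) v = a * dotv u v.
Proof. by rewrite /dotv mulr_sumr; apply: eq_bigr => k _; rewrite mxE mulrA. Qed.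

Lemma dotvNl u v : dotv (- u) v = - dotv u v.
Proof. by rewrite -scaleN1r dotvZl mulN1r. Qed.

Lemma dotvDr u w v : dotv v (u + w) = dotv v u + dotv v w.
Proof. by rewrite dotvC dotvDl !(dotvC v). Qed.

Lemma dotvZr a u v : dotv v (a *: u) = a * dotv v u.
Proof. by rewrite dotvC dotvZl dotvC. Qed.

Lemma dotvNr u v : dotv v (- u) = - dotv v u.
Proof. by rewrite dotvC dotvNl dotvC. Qed.

Lemma dotv_ge0 u : 0 <= dotv u u.
Proof. by apply: sumr_ge0 => k _; rewrite -expr2 sqr_ge0. Qed.

Lemma dotv_eq0 u v : dotv u u = 0 -> dotv u v = 0.
Proof.
move=> uu0; apply: big1 => k _.
have : u ord0 k * u ord0 k = 0.
  by apply: (psumr_eq0P _ uu0) => // i _; rewrite -expr2 sqr_ge0.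
by move/eqP; rewrite mulf_eq0 orbb => /eqP ->; rewrite mul0r.
Qed.

Lemma enorm_ge0 u : 0 <= enorm u.
Proof. exact: sqrtr_ge0. Qed.

Lemma enorm_sq u : enorm u ^+ 2 = dotv u u.
Proof. by rewrite sqr_sqrtr // dotv_ge0. Qed.

Lemma dotv_le_enorm u v : dotv u v <= enorm u * enorm v.
Proof.
have [u0|u_neq0] := eqVneq (enorm u) 0.
  by rewrite dotv_eq0 ?u0 ?mul0r // -enorm_sq u0 expr0n.
have [v0|v_neq0] := eqVneq (enorm v) 0.
  by rewrite dotvC dotv_eq0 ?v0 ?mulr0 // -enorm_sq v0 expr0n.
have uv_gt0 : 0 < enorm u * enorm v.
  by rewrite mulr_gt0 // lt0r ?u_neq0 ?v_neq0 enorm_ge0.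
(* |v| u - |u| v has squared norm 2 |u| |v| (|u| |v| - <u, v>). *)
have := dotv_ge0 (enorm v *: u - enorm u *: v).
rewrite !(dotvDl, dotvDr, dotvNl, dotvNr, dotvZl, dotvZr) (dotvC v u) -!enorm_sq.
by nra.
Qed.

Lemma ler_enormD u v : enorm (u + v) <= enorm u + enorm v.
Proof.
rewrite /enorm -[X in _ <= X]ger0_norm ?addr_ge0 ?enorm_ge0 //.
rewrite -sqrtr_sqr ler_sqrt ?sqr_ge0 //.
rewrite !(dotvDl, dotvDr) -!/(enorm _) sqrrD -!enorm_sq (dotvC v u).
by have := dotv_le_enorm u v; lra.
Qed.

Lemma enormZ a u : enorm (a *: u) = `|a| * enorm u.
Proof. by rewrite /enorm dotvZl dotvZr mulrA -expr2 sqrtrM ?sqr_ge0 // sqrtr_sqr. Qed.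

Lemma enormN u : enorm (- u) = enorm u.
Proof. by rewrite -scaleN1r enormZ normrN normr1 mul1r. Qed.

Lemma enorm0 : enorm (0 : 'rV[R]_d) = 0.
Proof. by rewrite -(scale0r (0 : 'rV[R]_d)) enormZ normr0 mul0r. Qed.

Lemma ler_enorm_sum (I : finType) (f : I -> 'rV[R]_d) :
  enorm (\sum_i f i) <= \sum_i enorm (f i).
Proof.
apply: (big_rec2 (fun y1 y2 => enorm y1 <= y2)); first by rewrite enorm0.
by move=> i y1 y2 _ IH; apply: le_trans (ler_enormD _ _) _; rewrite lerD.
Qed.

End EuclideanNorm.

Lemma sqr_le_add_sqr {R : realFieldType} {a b c : R} :
  0 <= c -> c <= a + b -> c ^+ 2 <= 2 * a ^+ 2 + 2 * b ^+ 2.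
Proof.
move=> c_ge0 c_le; have : c * c <= (a + b) * (a + b) by rewrite ler_pM.
by have := sqr_ge0 (a - b); nra.
Qed.

Section Epoch.
Context {R : realType} {d n : nat} {G : 'I_n -> 'rV[R]_d -> 'rV[R]_d} {gamma L : R}.
Hypothesis G_lip : forall i x y, enorm (G i x - G i y) <= L * enorm (x - y).
Hypothesis L_ge0 : 0 <= L.
Hypothesis gamma_ge0 : 0 <= gamma.
Hypothesis step_small : 2 * gamma * L * n%:R <= 1.
Hypothesis n_gt0 : (0 < n)%N.

Lemma mean_grad_gap_le (q : {perm 'I_n}) y (x : 'I_n -> 'rV[R]_d) c :
    (forall t, enorm (y - x t) <= c) ->
  enorm (n%:R^-1 *: (\sum_i G i y - \sum_t G (q t) (x t))) <= L * c.
Proof.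
move=> x_near; have n_neq0 : n%:R != 0 :> R by rewrite pnatr_eq0 -lt0n.
rewrite (reindex_perm q) -sumrB enormZ ger0_norm ?invr_ge0 //.
have sum_le : \sum_t enorm (G (q t) y - G (q t) (x t)) <= \sum_(t < n) L * c.
  by apply: ler_sum => t _; apply: le_trans (G_lip _ _ _) _; rewrite ler_wpM2l.
rewrite sumr_const card_ord -mulr_natr mulrC in sum_le.
rewrite -[L * c](mulKf n_neq0) ler_wpM2l ?invr_ge0 //.
exact: le_trans (ler_enorm_sum _ _) sum_le.
Qed.

Variables (p : {perm 'I_n}) (w v : 'rV[R]_d).

Local Notation xt t := (inner G gamma p w v w t).1.
Local Notation vt t := (inner G gamma p w v w t).2.

Lemma innerS t (t_lt : (t < n)%N) (j := p (Ordinal t_lt)) :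
  inner G gamma p w v w t.+1 =
  (xt t - gamma *: (G j (xt t) - G j w + v),
   (t%:R / t.+1%:R) *: vt t + (1 / t.+1%:R) *: G j (xt t)).
Proof. by rewrite /= /j; case: inner => x vt /=; rewrite insubT. Qed.

Lemma inner_drift_le t : (t <= n)%N -> enorm (xt t - w) <= 2 * gamma * t%:R * enorm v.
Proof.
elim: t => [|t IH] t_le; first by rewrite /= subrr enorm0 mulr0 mul0r.
rewrite innerS /=; set j := p _; set x := xt t.
have -> : x - gamma *: (G j x - G j w + v) - w =
          (x - w) + (- (gamma *: (G j x - G j w)) + - (gamma *: v)).
  by rewrite scalerDr opprD addrAC.
apply: le_trans (ler_enormD _ _) _; apply: le_trans (lerD (lexx _) (ler_enormD _ _)) _.
rewrite !enormN !enormZ ger0_norm //.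
have x_near := IH (ltnW t_le).
have gLt_le1 : 2 * gamma * L * t%:R <= 1.
  by apply: le_trans step_small; rewrite ler_wpM2l ?mulr_ge0 // ler_nat ltnW.
have grad_le : gamma * enorm (G j x - G j w) <= gamma * L * (2 * gamma * t%:R * enorm v).
  by rewrite -mulrA ler_wpM2l //; apply: le_trans (G_lip _ _ _) _; rewrite ler_wpM2l.
have := ler_wpM2l (mulr_ge0 gamma_ge0 (enorm_ge0 v)) gLt_le1.
by rewrite -addn1 natrD; lra.
Qed.

Lemma inner_dist_le t : (t <= n)%N -> enorm (w - xt t) <= 2 * gamma * n%:R * enorm v.
Proof.
move=> t_le; rewrite -enormN opprB; apply: le_trans (inner_drift_le _ t_le) _.
by rewrite ler_wpM2r ?enorm_ge0 // ler_wpM2l ?mulr_ge0 // ler_nat.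
Qed.

Lemma inner_running_sum t : (t <= n)%N ->
  t%:R *: vt t = \sum_(k < n | (k < t)%N) G (p k) (xt k).
Proof.
elim: t => [|t IH] t_le; first by rewrite scale0r big_pred0.
rewrite innerS /= (bigD1 (Ordinal t_le)) //=.
rewrite (eq_bigl (fun k : 'I_n => (k < t)%N)); last first.
  move=> k; rewrite ltnS leq_eqVlt -val_eqE /=.
  by case: ltngtP; rewrite ?andbT ?andbF.
rewrite -IH ?(ltnW t_le) // scalerDr !scalerA addrC; congr (_ + _).
  by rewrite mulrCA divff ?mulr1 // pnatr_eq0.
by rewrite mul1r divff ?scale1r // pnatr_eq0.
Qed.

Lemma inner_avg : vt n = n%:R^-1 *: \sum_t G (p t) (xt t).
Proof.
have := inner_running_sum _ (leqnn n).
rewrite (eq_bigl xpredT) => [<-|k]; last by rewrite ltn_ord.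
by rewrite scalerA mulVf ?scale1r // pnatr_eq0 -lt0n.
Qed.

Lemma mean_dir_gap_le :
  enorm (n%:R^-1 *: \sum_i G i w - n%:R^-1 *: \sum_t (G (p t) (xt t) - G (p t) w + v))
  <= 2 * gamma * L * n%:R * enorm v + enorm (n%:R^-1 *: \sum_i G i w - v).
Proof.
set S := \sum_i G i w; set SX := \sum_t G (p t) (xt t).
have -> : \sum_t (G (p t) (xt t) - G (p t) w + v) = SX - S + n%:R *: v.
  by rewrite big_split sumrB /= /S [in RHS](reindex_perm p) sumr_const card_ord scaler_nat.
have -> : n%:R^-1 *: S - n%:R^-1 *: (SX - S + n%:R *: v) =
          n%:R^-1 *: (S - SX) + (n%:R^-1 *: S - v).
  rewrite !scalerDr scalerA mulVf ?pnatr_eq0 -?lt0n // scale1r.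
  by rewrite !scalerN !opprD opprK !addrA.
apply: le_trans (ler_enormD _ _) _; rewrite lerD //.
have near_anchor (t : 'I_n) : enorm (w - xt t) <= 2 * gamma * n%:R * enorm v.
  exact: inner_dist_le _ (ltnW (ltn_ord t)).
apply: le_trans (mean_grad_gap_le p w (fun t => xt t) _ near_anchor) _.
by lra.
Qed.

Lemma end_grad_gap_le :
  enorm (n%:R^-1 *: \sum_i G i (xt n) - vt n) <= 4 * gamma * L * n%:R * enorm v.
Proof.
rewrite inner_avg -scalerBr.
have near_end (t : 'I_n) : enorm (xt n - xt t) <= 4 * gamma * n%:R * enorm v.
  have t_le := ltnW (ltn_ord t); rewrite -(subrK w (xt n)) -addrA.
  apply: le_trans (ler_enormD _ _) _.
  have := inner_dist_le _ (leqnn n); rewrite -enormN opprB.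
  by have := inner_dist_le _ t_le; lra.
apply: le_trans (mean_grad_gap_le p (xt n) (fun t => xt t) _ near_end) _.
by lra.
Qed.

End Epoch.

Section States.
Context {R : realType} {d n : nat} {G : 'I_n -> 'rV[R]_d -> 'rV[R]_d} {gamma : R}
  { pi : nat -> {perm 'I_n} } {x00 : 'rV[R]_d}.

Local Notation omega := (omega G gamma pi x00).
Local Notation vbar := (vbar G gamma pi x00).
Local Notation epoch s := (inner G gamma (pi s) (omega s) (vbar s) (omega s)).

Lemma state_start_eq_anchor s :
  (state G gamma pi x00 s).1.1 = (state G gamma pi x00 s).1.2.
Proof. by case: s => [|s] //=; case: state => [[x0 w] v]; case: inner. Qed.

Lemma v_dirE s t :
  v_dir G gamma pi x00 s t = G (pi s t) (epoch s t).1 - G (pi s t) (omega s) + vbar s.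
Proof.
rewrite /v_dir /x_it /omega /vbar; have := state_start_eq_anchor s.
by case: state => [[x0 w] v] /= ->.
Qed.

Lemma omegaS s : omega s.+1 = (epoch s n).1.
Proof.
rewrite /omega /vbar /=; have := state_start_eq_anchor s.
by case: state => [[x0 w] v] /= ->; case: inner.
Qed.

Lemma vbarS s : vbar s.+1 = (epoch s n).2.
Proof.
rewrite /omega /vbar /=; have := state_start_eq_anchor s.
by case: state => [[x0 w] v] /= ->; case: inner.
Qed.

End States.

Theorem lemma2 (R : realType) (d n : nat) (hn : (0 < n)%N)
  (F : 'I_n -> 'rV[R]_d -> R) (G : 'I_n -> 'rV[R]_d -> 'rV[R]_d)
  (L gamma : R) (pi : nat -> {perm 'I_n}) (x00 : 'rV[R]_d) :
  0 < L ->
  (forall i, L_smooth L (F i) (G i)) ->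
  ((exists mu : R, 0 < mu /\ forall i, strongly_convex mu (F i)) \/
   (exists m : R, forall x, m <= n%:R^-1 * \sum_(i < n) F i x)) ->
  0 < gamma -> gamma <= 1 / (2 * L * n%:R) ->
  forall s : nat, (1 <= s)%N ->
    enorm (n%:R^-1 *: \sum_(i < n) G i (omega G gamma pi x00 s)
           - n%:R^-1 *: \sum_(t < n) v_dir G gamma pi x00 s t) ^+ 2
    <= 8 * gamma ^+ 2 * L ^+ 2 * n%:R ^+ 2 * enorm (vbar G gamma pi x00 s) ^+ 2
     + 32 * gamma ^+ 2 * L ^+ 2 * n%:R ^+ 2 * enorm (vbar G gamma pi x00 s.-1) ^+ 2.
Proof.
move=> L_gt0 smooth _ gamma_gt0 gamma_le [//|s] _; rewrite succnK.
have G_lip i x y : enorm (G i x - G i y) <= L * enorm (x - y) by case: (smooth i).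
have step_small : 2 * gamma * L * n%:R <= 1.
  by move: gamma_le; rewrite ler_pdivlMr ?mulr_gt0 ?ltr0n // !mulrA (mulrC gamma).
have [L_ge0 gamma_ge0] := (ltW L_gt0, ltW gamma_gt0).
rewrite (eq_bigr _ (fun t _ => v_dirE s.+1 t)).
have gap_now := mean_dir_gap_le G_lip L_ge0 gamma_ge0 step_small hn
  (pi s.+1) (omega G gamma pi x00 s.+1) (vbar G gamma pi x00 s.+1).
have gap_prev := end_grad_gap_le G_lip L_ge0 gamma_ge0 step_small hn
  (pi s) (omega G gamma pi x00 s) (vbar G gamma pi x00 s).
rewrite -omegaS -vbarS in gap_prev.
have gap_le := le_trans gap_now (lerD (lexx _) gap_prev).
by apply: le_trans (sqr_le_add_sqr (enorm_ge0 _) gap_le) _; lra.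
Qed.
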